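(* Let $R$ be a commutative GPP-ring and $I$ a pure ideal of $R$. Then $R/I$ is a GPP-ring.
   Context: A commutative ring $A$ is a GPP-ring if for each $f\in A$ there exists $n\geq 1$ such that $Af^n$ is a projective $A$-module. An ideal $I$ of $R$ is pure if the canonical map $R\to R/I$ is flat; equivalently, for each $f\in I$ there exists $g\in I$ with $f(1-g)=0$. *)

From HB Require Import structures.
From mathcomp Require Import all_boot all_order all_algebra.
Set Implicit Arguments. Unset Strict Implicit. Unset Printing Implicit Defensive.
Import GRing.Theory.
Local Open Scope ring_scope.

Definition linear_on (A : comPzRingType) (N : lmodType A) (P : A -> Prop)
    (h : A -> N) : Prop :=
  forall (a : A) (x y : A), P x -> P y -> h (a * x + y) = a *: h x + h y.

(* A submodule P of the regular module A is a projective A-module: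
   lifting property along every surjective A-linear map. *)
Definition projective_submod (A : comPzRingType) (P : A -> Prop) : Prop :=
  forall (M N : lmodType A) (g : {linear M -> N}) (h : A -> N),
    (forall y : N, exists x : M, g x = y) ->
    linear_on P h ->
    exists k : A -> M, linear_on P k /\ (forall x, P x -> g (k x) = h x).

Definition principal_ideal (A : comPzRingType) (f : A) : A -> Prop :=
  fun x => exists a : A, x = a * f.

Definition GPP (A : comPzRingType) : Prop :=
  forall f : A, exists n : nat, (1 <= n)%N /\
    projective_submod (principal_ideal (f ^+ n)).

Definition is_ideal (R : comPzRingType) (I : R -> Prop) : Prop :=
  [/\ I 0, (forall x y, I x -> I y -> I (x + y)) & (forall a x, I x -> I (a * x))].

(* Pure ideal, via the element-wise characterization given in the paper. *)
Definition pure_ideal (R : comPzRingType) (I : R -> Prop) : Prop :=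
  is_ideal I /\ forall f, I f -> exists g, I g /\ f * (1 - g) = 0.

(** Restriction of scalars along [pi : R -> S] turns every lifting problem
    for [S (pi t)] into one for [R t]. The lift [k'] obtained in [R] vanishes
    on [I ∩ R t]: for [x] there, purity gives [g ∈ I] with [x (1 - g) = 0],
    and since [g] acts as zero on an [S]-module,
    [k' x = (1 - g) k' x = k' (x (1 - g)) = 0]. Hence [k'] is constant on the
    fibres of [pi] and descends to an [S]-linear lift on [S (pi t)]. *)

From HB Require Import structures.
From mathcomp Require Import all_boot all_order all_algebra.
From Stdlib Require Import ClassicalEpsilon.
Set Implicit Arguments. Unset Strict Implicit. Unset Printing Implicit Defensive.
Import GRing.Theory.
Local Open Scope ring_scope.

Lemma exists_factor_on (A B C : Type) (f : A -> B) (P : A -> Prop) (h : A -> C) :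
  inhabited A -> (forall x y, P x -> P y -> f x = f y -> h x = h y) ->
  exists k : B -> C, forall x, P x -> k (f x) = h x.
Proof.
move=> inhA h_compat.
exists (fun b => h (epsilon inhA (fun x => P x /\ f x = b))) => x Px.
have [Px' fx'] :=
  epsilon_spec inhA (fun y => P y /\ f y = f x) (ex_intro _ x (conj Px erefl)).
exact: h_compat.
Qed.

Definition restrict_scalars (R S : comPzRingType) (pi : {rmorphism R -> S})
  (M : lmodType S) : Type := M.

HB.instance Definition _ (R S : comPzRingType) (pi : {rmorphism R -> S})
  (M : lmodType S) := GRing.Zmodule.on (restrict_scalars pi M).

Section RestrictScalarsModule.
Variables (R S : comPzRingType) (pi : {rmorphism R -> S}) (M : lmodType S).
Local Notation RM := (restrict_scalars pi M).

Definition restr_scale (a : R) (m : RM) : RM := (pi a *: (m : M) : M).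

Lemma restr_scaleA a b m : restr_scale a (restr_scale b m) = restr_scale (a * b) m.
Proof. by rewrite /restr_scale scalerA rmorphM. Qed.

Lemma restr_scale1 : left_id 1 restr_scale.
Proof. by move=> m; rewrite /restr_scale rmorph1 scale1r. Qed.

Lemma restr_scaleDr : right_distributive restr_scale +%R.
Proof. by move=> a u v; rewrite /restr_scale scalerDr. Qed.

Lemma restr_scaleDl m : {morph restr_scale^~ m : a b / a + b}.
Proof. by move=> a b; rewrite /restr_scale rmorphD scalerDl. Qed.

HB.instance Definition _ := GRing.Zmodule_isLmodule.Build R RM
  restr_scaleA restr_scale1 restr_scaleDr restr_scaleDl.

Lemma restr_scaleE a (m : RM) : a *: m = pi a *: (m : M) :> M.
Proof. by []. Qed.

End RestrictScalarsModule.

Section RestrictScalarsLinear.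
Variables (R S : comPzRingType) (pi : {rmorphism R -> S}).
Variables (M N : lmodType S) (g : {linear M -> N}).

Definition restr_linear (m : restrict_scalars pi M) : restrict_scalars pi N := g m.

Lemma restr_linear_is_linear : linear restr_linear.
Proof. by move=> a u v; rewrite /restr_linear /= linearP. Qed.

HB.instance Definition _ := GRing.isLinear.Build R (restrict_scalars pi M)
  (restrict_scalars pi N) *:%R restr_linear restr_linear_is_linear.

End RestrictScalarsLinear.

Lemma linear_on_rmorph (R S : comPzRingType) (pi : {rmorphism R -> S})
    (N : lmodType S) (P : R -> Prop) (Q : S -> Prop) (h : S -> N) :
  (forall x, P x -> Q (pi x)) -> linear_on Q h ->
  linear_on P (fun x => h (pi x) : restrict_scalars pi N).
Proof.
move=> PQ hlin a x y Px Py.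
by rewrite restr_scaleE rmorphD rmorphM hlin //; apply: PQ.
Qed.

Section LinearOn.
Variables (A : comPzRingType) (M : lmodType A) (P : A -> Prop) (k : A -> M).
Hypotheses (P0 : P 0) (k_lin : linear_on P k).

Lemma linear_on0 : k 0 = 0.
Proof.
apply: (@addrI _ (k 0)); rewrite addr0.
by have := k_lin 1 P0 P0; rewrite mulr0 addr0 scale1r.
Qed.

Lemma linear_onB x y : P (x - y) -> P y -> k x = k (x - y) + k y.
Proof. by move=> Pxy Py; have := k_lin 1 Pxy Py; rewrite mul1r subrK scale1r. Qed.

Lemma linear_on_eq0_annihilated x g :
  P x -> x * (1 - g) = 0 -> g *: k x = 0 -> k x = 0.
Proof.
move=> Px x1g gk; have := k_lin (1 - g) Px P0.
by rewrite mulrC x1g add0r linear_on0 addr0 scalerBl scale1r gk subr0.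
Qed.

End LinearOn.

Section PrincipalIdeal.
Variables (A : comPzRingType) (t : A).

Lemma principal_ideal0 : principal_ideal t 0.
Proof. by exists 0; rewrite mul0r. Qed.

Lemma principal_idealB x y :
  principal_ideal t x -> principal_ideal t y -> principal_ideal t (x - y).
Proof. by move=> [b ->] [c ->]; exists (b - c); rewrite mulrBl. Qed.

Lemma principal_idealMD a x y :
  principal_ideal t x -> principal_ideal t y -> principal_ideal t (a * x + y).
Proof. by move=> [b ->] [c ->]; exists (a * b + c); rewrite mulrDl mulrA. Qed.

End PrincipalIdeal.

Lemma rmorph_principal_ideal (R S : comPzRingType) (pi : {rmorphism R -> S}) t x :
  principal_ideal t x -> principal_ideal (pi t) (pi x).
Proof. by move=> [b ->]; exists (pi b); rewrite rmorphM. Qed.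

Lemma principal_ideal_rmorph (R S : comPzRingType) (pi : {rmorphism R -> S}) t s :
  (forall s : S, exists r : R, pi r = s) ->
  principal_ideal (pi t) s -> exists2 x, principal_ideal t x & s = pi x.
Proof.
move=> pi_surj [a ->]; have [b <-] := pi_surj a.
by exists (b * t); [exists b | rewrite rmorphM].
Qed.

Section PureQuotient.
Variables (R S : comPzRingType) (I : R -> Prop) (pi : {rmorphism R -> S}).
Hypotheses (I_pure : pure_ideal I) (pi_surj : forall s : S, exists r : R, pi r = s)
  (ker_pi : forall r : R, pi r = 0 <-> I r).

Lemma restr_scale_ker (M : lmodType S) g (m : restrict_scalars pi M) :
  I g -> g *: m = 0.
Proof. by move=> Ig; rewrite restr_scaleE (proj2 (ker_pi g) Ig) scale0r. Qed.

Lemma linear_on_descends t (M : lmodType S) (k' : R -> restrict_scalars pi M) :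
  linear_on (principal_ideal t) k' ->
  exists k : S -> M, linear_on (principal_ideal (pi t)) k /\
    forall x, principal_ideal t x -> k (pi x) = k' x.
Proof.
move=> k'_lin.
have k'_ker x : principal_ideal t x -> I x -> k' x = 0.
  move=> Px Ix; have [g [Ig x1g]] := I_pure.2 x Ix.
  exact: linear_on_eq0_annihilated (principal_ideal0 t) k'_lin _ _ Px x1g
    (restr_scale_ker _ Ig).
have k'_compat x y : principal_ideal t x -> principal_ideal t y ->
    pi x = pi y -> k' x = k' y.
  move=> Px Py pixy; have Pxy := principal_idealB Px Py.
  rewrite (linear_onB k'_lin Pxy Py) k'_ker ?add0r //.
  by apply/ker_pi; rewrite rmorphB pixy subrr.
have [k kE] := exists_factor_on (inhabits 0) k'_compat.
exists k; split=> // a _ _ /(principal_ideal_rmorph pi_surj) [x Px ->]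
  /(principal_ideal_rmorph pi_surj) [y Py ->].
have [c <-] := pi_surj a.
have Pcxy := principal_idealMD c Px Py.
by rewrite -rmorphM -rmorphD !kE //; apply: k'_lin.
Qed.

Lemma projective_principal_rmorph t :
  projective_submod (principal_ideal t) -> projective_submod (principal_ideal (pi t)).
Proof.
move=> t_proj M N g h g_surj h_lin.
have h_lin' := linear_on_rmorph (@rmorph_principal_ideal _ _ pi t) h_lin.
have [k' [k'_lin k'_lift]] := t_proj (restrict_scalars pi M) (restrict_scalars pi N)
  (@restr_linear _ _ pi _ _ g) _ g_surj h_lin'.
have [k [k_lin kE]] := linear_on_descends k'_lin.
exists k; split=> // _ /(principal_ideal_rmorph pi_surj) [x Px ->].
by rewrite kE //; apply: k'_lift.
Qed.

End PureQuotient.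

Theorem proposition2p9 (R S : comPzRingType) (I : R -> Prop)
    (pi : {rmorphism R -> S}) :
  GPP R -> pure_ideal I ->
  (forall s : S, exists r : R, pi r = s) ->
  (forall r : R, pi r = 0 <-> I r) ->
  GPP S.
Proof.
move=> GPP_R I_pure pi_surj ker_pi s.
have [r <-] := pi_surj s.
have [n [n_gt0 rn_proj]] := GPP_R r.
exists n; split=> //.
by have := projective_principal_rmorph I_pure pi_surj ker_pi rn_proj; rewrite rmorphXn.
Qed.
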